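(* Let $Y$ be a sofic shift and let $(G,L_G)$ be a right-resolving and regular labeled graph presenting $Y$. Then there is a labeled-graph homomorphism $\theta : (G,L_G) \to (\mathbb K(Y), L_{\mathbb K(Y)})$ such that the induced sliding block code satisfies $\theta(\mathcal R(L_G)) \subseteq \mathcal R(L_{\mathbb K(Y)})$, and $\theta(V_G)$ is a hereditary subset of $V_{\mathbb K(Y)}$. If furthermore $(G,L_G)$ is follower-separated, then $\theta$ is an isomorphism of labeled graphs from $(G,L_G)$ onto the hereditary labeled subgraph $(\mathbb K(Y)_{\theta(V_G)}, L_{\mathbb K(Y)})$.
   Context: A labeled graph $(G,L_G)$: finite directed graph $G$ (vertices $V_G$, edges $E_G$, source/terminal maps $s_G,t_G$), without sinks or sources, with labeling $L_G:E_G\to A$, $A$ a finite alphabet; $X_G$ is its edge shift; $L_G$ acts coordinatewise on paths; it presents $Y=L_G(X_G)$. $X_G[0,\infty)$ denotes right-infinite paths, $X_G(-\infty,-1]$ left-infinite paths $\cdots e_{-2}e_{-1}$; $s_G$ of a right-infinite path is the source of its first edge, $t_G$ of a left-infinite path is the terminal vertex of its last edge; $Y[0,\infty)=\{y_{[0,\infty)}:y\in Y\}$. Right-resolving: distinct edges with the same source have distinct labels. Follower set of a vertex: $f_G(v)=\{L_G(x):x\in X_G[0,\infty), s_G(x)=v\}$. For $y\in Y$: $F(y)=\{w\in Y[0,\infty): y_{(-\infty,-1]}w\in Y\}$. A vertex $v$ is regular if there is $z\in X_G$ with $t_G(z_{(-\infty,-1]})=v$ and $f_G(v)=F(L_G(z))$;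 the labeled graph is regular if all vertices are regular. Follower-separated: $f_G(v)=f_G(w)$ implies $v=w$. For a sliding block code $\pi:X\to Y$ and $x\in X$ let $\mathbb U(x)=\{z\in X: \exists N\ \forall i\le N,\ z_i=x_i\}$; $x$ is regular for $\pi$ if $\pi$ maps $\mathbb U(x)$ onto $\mathbb U(\pi(x))$; $\mathcal R(\pi)$ is the set of such points. Future cover $(\mathbb K(Y),L_{\mathbb K(Y)})$ of a sofic shift $Y\subseteq A^{\mathbb Z}$: vertices are the distinct sets $F(y)$, $y\in Y$ (finitely many); there is an edge labeled $a\in A$ from $F(y)$ to $F(z)$ exactly when $F(z)=\{w\in A^{\mathbb N}: aw\in F(y)\}$ (one such edge for each such pair and label). A labeled-graph homomorphism is a graph homomorphism (vertices to vertices, edges to edges, compatible with sources and terminals) preserving labels; it induces a sliding block code between the edge shifts. A set $U$ of vertices is hereditary if $s(e)\in U$ implies $t(e)\in U$ for every edge $e$; the hereditary labeled subgraph on $U$ has vertex set $U$ and all edges with source in $U$, with the restricted labeling. *)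

From mathcomp Require Import all_boot.
From Stdlib Require Import ZArith.

Set Implicit Arguments.
Unset Strict Implicit.
Unset Printing Implicit Defensive.

Definition setEq {T : Type} (P Q : T -> Prop) : Prop := forall t, P t <-> Q t.

(* A labeled graph is given by vertex type V, edge type E, source/terminal
   maps src, tgt : E -> V and labeling lab : E -> A. *)

Definition bipath {V E : Type} (src tgt : E -> V) (x : Z -> E) : Prop :=
  forall i : Z, tgt (x i) = src (x (i + 1)%Z).

Definition rpath {V E : Type} (src tgt : E -> V) (x : nat -> E) : Prop :=
  forall n : nat, tgt (x n) = src (x n.+1).

Definition labcode {E A : Type} (lab : E -> A) (x : Z -> E) : Z -> A :=
  fun i => lab (x i).

Definition presented {V E A : Type} (src tgt : E -> V) (lab : E -> A)
  (y : Z -> A) : Prop :=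
  exists x, bipath src tgt x /\ forall i, y i = lab (x i).

Definition essential {V E : Type} (src tgt : E -> V) : Prop :=
  forall v : V, (exists e, src e = v) /\ (exists e, tgt e = v).

Definition right_resolving {V E A : Type} (src : E -> V) (lab : E -> A) : Prop :=
  forall e e' : E, src e = src e' -> lab e = lab e' -> e = e'.

Definition right_rays {A : Type} (Y : (Z -> A) -> Prop) (w : nat -> A) : Prop :=
  exists y, Y y /\ forall n : nat, y (Z.of_nat n) = w n.

Definition concat {A : Type} (y : Z -> A) (w : nat -> A) : Z -> A :=
  fun i => if (i <? 0)%Z then y i else w (Z.to_nat i).

Definition follower_set {A : Type} (Y : (Z -> A) -> Prop) (y : Z -> A)
  : (nat -> A) -> Prop :=
  fun w => right_rays Y w /\ Y (concat y w).

Definition vfollower {V E A : Type} (src tgt : E -> V) (lab : E -> A) (v : V)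
  : (nat -> A) -> Prop :=
  fun w => exists x, rpath src tgt x /\ src (x 0%N) = v /\
                     forall n, w n = lab (x n).

Definition regular_vertex {V E A : Type} (src tgt : E -> V) (lab : E -> A)
  (v : V) : Prop :=
  exists z, bipath src tgt z /\ tgt (z (-1)%Z) = v /\
    setEq (vfollower src tgt lab v)
          (follower_set (presented src tgt lab) (labcode lab z)).

Definition regular_graph {V E A : Type} (src tgt : E -> V) (lab : E -> A) : Prop :=
  forall v : V, regular_vertex src tgt lab v.

Definition follower_separated {V E A : Type} (src tgt : E -> V) (lab : E -> A)
  : Prop :=
  forall v w : V, setEq (vfollower src tgt lab v) (vfollower src tgt lab w) ->
    v = w.

Definition Uset {S : Type} (X : (Z -> S) -> Prop) (x z : Z -> S) : Prop :=
  X z /\ exists N : Z, forall i : Z, (i <= N)%Z -> z i = x i.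

Definition image_shift {S T : Type} (X : (Z -> S) -> Prop)
  (pi : (Z -> S) -> (Z -> T)) (y : Z -> T) : Prop :=
  exists x, X x /\ forall i, y i = pi x i.

Definition regular_point {S T : Type} (X : (Z -> S) -> Prop)
  (pi : (Z -> S) -> (Z -> T)) (x : Z -> S) : Prop :=
  X x /\
  (forall z, Uset X x z -> Uset (image_shift X pi) (pi x) (pi z)) /\
  (forall y, Uset (image_shift X pi) (pi x) y ->
     exists z, Uset X x z /\ forall i, pi z i = y i).

Definition KV {A : Type} (Y : (Z -> A) -> Prop) : Type :=
  {P : (nat -> A) -> Prop | exists y, Y y /\ P = follower_set Y y}.

Definition shiftcons {A : Type} (a : A) (w : nat -> A) : nat -> A :=
  fun n => match n with 0 => a | m.+1 => w m end.

Definition KE {A : Type} (Y : (Z -> A) -> Prop) : Type :=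
  {t : KV Y * A * KV Y |
     setEq (proj1_sig t.2) (fun w => proj1_sig t.1.1 (shiftcons t.1.2 w))}.

Definition Ksrc {A : Type} (Y : (Z -> A) -> Prop) (e : KE Y) : KV Y :=
  (proj1_sig e).1.1.
Definition Ktgt {A : Type} (Y : (Z -> A) -> Prop) (e : KE Y) : KV Y :=
  (proj1_sig e).2.
Definition Klab {A : Type} (Y : (Z -> A) -> Prop) (e : KE Y) : A :=
  (proj1_sig e).1.2.

Definition lg_hom {V E V' E' A : Type}
  (src tgt : E -> V) (lab : E -> A) (src' tgt' : E' -> V') (lab' : E' -> A)
  (thV : V -> V') (thE : E -> E') : Prop :=
  forall e : E, src' (thE e) = thV (src e) /\ tgt' (thE e) = thV (tgt e) /\
                lab' (thE e) = lab e.

Definition hereditary {V E : Type} (src tgt : E -> V) (U : V -> Prop) : Prop :=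
  forall e : E, U (src e) -> U (tgt e).

(* theta is an isomorphism of labeled graphs from G onto the hereditary
   labeled subgraph of G' on theta(V): bijective onto theta(V) on vertices,
   and bijective onto the edges of G' with source in theta(V). Compatibility
   with sources, terminals and labels is given by lg_hom. *)
Definition iso_onto_image_subgraph {V E V' E' : Type} (src' : E' -> V')
  (thV : V -> V') (thE : E -> E') : Prop :=
  injective thV /\ injective thE /\
  (forall e' : E', (exists v, thV v = src' e') -> exists e, thE e = e').

From mathcomp Require Import all_boot zify.
From Stdlib Require Import ZArith Lia Classical ClassicalEpsilon.
From Stdlib Require Import FunctionalExtensionality PropExtensionality ProofIrrelevance.

(* Send a vertex v to its follower set f_G(v): regularity makes it a vertex of
   K(Y), and right-resolvingness makes f_G(t(e)) the L(e)-derivative of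
   f_G(s(e)), so edges go to edges; conversely an edge of K(Y) leaving f_G(v) is
   read off a path from v, hence is the image of an edge leaving v.  The only
   non-local point is that the labels of a bi-infinite path in K(Y) form a point
   of Y: each finite window is realised by a path of G, and Koenig's lemma on
   the finite graph G glues these into a bi-infinite path.  Regular points are
   then preserved because θ commutes with the labelings. *)

Set Implicit Arguments.
Unset Strict Implicit.
Unset Printing Implicit Defensive.

Lemma finite_antitone_witness (V : finType) (Q : V -> nat -> Prop) :
  (forall v (k k' : nat), k' <= k -> Q v k -> Q v k') ->
  (forall k, exists v, Q v k) -> exists v, forall k, Q v k.
Proof.
move=> Qanti Qall; apply: NNPP => noQ.
have [f Qf] : exists f : V -> nat, forall v, ~ Q v (f v).
  apply: (@choice V nat (fun v k => ~ Q v k)) => v.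
  apply: NNPP => Qv; apply: noQ; exists v => k.
  by apply: NNPP => nQ; apply: Qv; exists k.
have [v Qv] := Qall (\max_(u : V) f u).
exact: Qf v (Qanti _ _ _ (leq_bigmax v) Qv).
Qed.

Section Koenig.
Variables (V : finType) (R : Z -> V -> V -> Prop).
Local Open Scope Z_scope.

Definition chain (a b : Z) (c : Z -> V) : Prop :=
  forall i, a <= i < b -> R i (c i) (c (i + 1)).

Lemma chain_sub a b a' b' c : chain a b c -> a <= a' -> b' <= b -> chain a' b' c.
Proof. by move=> abc aa' b'b i ii; apply: abc; lia. Qed.

Definition on_long_chains (i : Z) (v : V) : Prop :=
  forall k : nat, exists c, c i = v /\ chain (i - Z.of_nat k) (i + Z.of_nat k) c.

Lemma on_long_chains_succ i v : on_long_chains i v ->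
  exists v', R i v v' /\ on_long_chains (i + 1) v'.
Proof.
move=> vlong.
suff [v' v'long] : exists v', forall k : nat, R i v v' /\
    exists c, c (i + 1) = v' /\ chain (i + 1 - Z.of_nat k) (i + 1 + Z.of_nat k) c.
  by exists v'; split; [case: (v'long 0%nat) | move=> k; case: (v'long k)].
apply: finite_antitone_witness => [w k k' le_k'k [Rvw [c [cw cch]]] | k].
  by split=> //; exists c; split=> //; apply: (chain_sub cch); lia.
have [c [ci cch]] := vlong k.+1.
exists (c (i + 1)); split; first by rewrite -ci; apply: cch; lia.
by exists c; split=> //; apply: (chain_sub cch); lia.
Qed.

Lemma on_long_chains_pred i v : on_long_chains i v ->
  exists v', R (i - 1) v' v /\ on_long_chains (i - 1) v'.
Proof.
move=> vlong.
suff [v' v'long] : exists v', forall k : nat, R (i - 1) v' v /\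
    exists c, c (i - 1) = v' /\ chain (i - 1 - Z.of_nat k) (i - 1 + Z.of_nat k) c.
  by exists v'; split; [case: (v'long 0%nat) | move=> k; case: (v'long k)].
apply: finite_antitone_witness => [w k k' le_k'k [Rwv [c [cw cch]]] | k].
  by split=> //; exists c; split=> //; apply: (chain_sub cch); lia.
have [c [ci cch]] := vlong k.+1.
exists (c (i - 1)); split; first by have := cch (i - 1); rewrite Z.sub_add ci; apply; lia.
by exists c; split=> //; apply: (chain_sub cch); lia.
Qed.

Lemma koenig : (forall k : nat, exists c, chain (- Z.of_nat k) (Z.of_nat k) c) ->
  exists c : Z -> V, forall i, R i (c i) (c (i + 1)).
Proof.
move=> chains.
have [v0 v0long] : exists v0, on_long_chains 0 v0.
  apply: finite_antitone_witness => [w k k' le_k'k [c [cw cch]] | k].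
    by exists c; split=> //; apply: (chain_sub cch); lia.
  have [c cch] := chains k.
  by exists (c 0), c; split=> //; apply: (chain_sub cch); lia.
pose next i v := epsilon (inhabits v) (fun v' => R i v v' /\ on_long_chains (i + 1) v').
pose prev i v := epsilon (inhabits v) (fun v' => R (i - 1) v' v /\ on_long_chains (i - 1) v').
have next_spec i v : on_long_chains i v ->
    R i v (next i v) /\ on_long_chains (i + 1) (next i v).
  by move/on_long_chains_succ; apply: epsilon_spec.
have prev_spec i v : on_long_chains i v ->
    R (i - 1) (prev i v) v /\ on_long_chains (i - 1) (prev i v).
  by move/on_long_chains_pred; apply: epsilon_spec.
pose fw n := iteri n (fun k => next (Z.of_nat k)) v0.
pose bw n := iteri n (fun k => prev (- Z.of_nat k)) v0.
have fw_long n : on_long_chains (Z.of_nat n) (fw n).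
  elim: n => [|n IH] //; rewrite Nat2Z.inj_succ -Z.add_1_r; exact: (next_spec _ _ IH).2.
have bw_long n : on_long_chains (- Z.of_nat n) (bw n).
  elim: n => [|n IH] //; rewrite Nat2Z.inj_succ -Z.add_1_r Z.opp_add_distr.
  exact: (prev_spec _ _ IH).2.
pose c i := if 0 <=? i then fw (Z.to_nat i) else bw (Z.to_nat (- i)).
have c_pos n : c (Z.of_nat n) = fw n.
  by rewrite /c (_ : (0 <=? Z.of_nat n) = true) ?Nat2Z.id //; lia.
have c_neg n : c (- Z.of_nat n) = bw n.
  case: n => [|n] //; rewrite /c (_ : (0 <=? - Z.of_nat n.+1) = false); last by lia.
  by rewrite Z.opp_involutive Nat2Z.id.
exists c => i.
have [[n ->] | [n ->]] : (exists n, i = Z.of_nat n) \/ exists n, i = - Z.of_nat n.+1.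
  case: (Z.leb_spec 0 i) => ?;
    [left; exists (Z.to_nat i) | right; exists (Z.to_nat (- i - 1))]; lia.
- rewrite Z.add_1_r -Nat2Z.inj_succ !c_pos; exact: (next_spec _ _ (fw_long n)).1.
- rewrite (_ : _ + 1 = - Z.of_nat n); last by lia.
  rewrite !c_neg (_ : - Z.of_nat n.+1 = - Z.of_nat n - 1); last by lia.
  exact: (prev_spec _ _ (bw_long n)).1.
Qed.

End Koenig.

Lemma presented_closed (V A : Type) (E : finType) (src tgt : E -> V) (lab : E -> A)
    (y : Z -> A) :
  (forall k : nat, exists x, bipath src tgt x /\
     forall i, (- Z.of_nat k <= i < Z.of_nat k)%Z -> y i = lab (x i)) ->
  presented src tgt lab y.
Proof.
move=> windows.
suff [x xR] : exists x : Z -> E, forall i, tgt (x i) = src (x (i + 1)%Z) /\ y i = lab (x i).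
  by exists x; split=> i; case: (xR i).
apply: (koenig (R := fun i e e' => tgt e = src e' /\ y i = lab e)) => k.
have [x [xpath xy]] := windows k.
by exists x => i /xy; split; [exact: xpath |].
Qed.

Lemma setEq_eq (T : Type) (P Q : T -> Prop) : setEq P Q -> P = Q.
Proof.
by move=> PQ; apply: functional_extensionality => t; apply: propositional_extensionality.
Qed.

Lemma proj1_sig_inj (T : Type) (P : T -> Prop) (u v : sig P) :
  proj1_sig u = proj1_sig v -> u = v.
Proof. by apply: eq_sig_hprop => x; apply: proof_irrelevance. Qed.

Lemma KV_inhabited (A : Type) (Y : (Z -> A) -> Prop) (u : KV Y) :
  exists w, proj1_sig u w.
Proof.
case: u => P [y [Yy PF]] /=; rewrite PF.
exists (fun n => y (Z.of_nat n)); split; first by exists y.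
rewrite (_ : concat y _ = y) //; apply: functional_extensionality => i.
by rewrite /concat; case: Z.ltb_spec => // ?; rewrite Z2Nat.id.
Qed.

Lemma Ksrc_shiftcons (A : Type) (Y : (Z -> A) -> Prop) (e : KE Y) w :
  proj1_sig (Ktgt e) w -> proj1_sig (Ksrc e) (shiftcons (Klab e) w).
Proof. exact: proj1 (proj2_sig e w). Qed.

Definition prepend (A : Type) (k : nat) (u w : nat -> A) : nat -> A :=
  fun j => if j < k then u j else w (j - k).

Lemma prepend0 (A : Type) (u w : nat -> A) : prepend 0 u w = w.
Proof. by apply: functional_extensionality => j; rewrite /prepend ltn0 subn0. Qed.

Lemma prependS (A : Type) k (u w : nat -> A) :
  prepend k.+1 u w = shiftcons (u 0) (prepend k (fun j => u j.+1) w).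
Proof. by apply: functional_extensionality => -[|j]; rewrite /prepend /= ?ltnS ?subSS. Qed.

Lemma Kpath_prepend (A : Type) (Y : (Z -> A) -> Prop) (z : Z -> KE Y) :
  bipath (@Ksrc A Y) (@Ktgt A Y) z ->
  forall (k : nat) i w, proj1_sig (Ksrc (z (i + Z.of_nat k)%Z)) w ->
  proj1_sig (Ksrc (z i)) (prepend k (fun j => Klab (z (i + Z.of_nat j)%Z)) w).
Proof.
move=> zpath; elim=> [|k IH] i w.
  by rewrite Z.add_0_r prepend0.
rewrite prependS Z.add_0_r (_ : (i + Z.of_nat k.+1 = i + 1 + Z.of_nat k)%Z); last by lia.
move/IH; rewrite -zpath => /Ksrc_shiftcons.
congr (proj1_sig _ (shiftcons _ (prepend _ _ _))).
by apply: functional_extensionality => j; congr (Klab (z _)); lia.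
Qed.

Lemma Kpath_labels_presented (V A E : finType) (src tgt : E -> V) (lab : E -> A)
    (z : Z -> KE (presented src tgt lab)) :
  bipath (@Ksrc A _) (@Ktgt A _) z -> presented src tgt lab (labcode (@Klab A _) z).
Proof.
move=> zpath; apply: presented_closed => k.
(* The window [-k, k) is read from the vertex at -k, a follower set F(y0) whose
   y0 supplies a left context in Y. *)
have [w zkw] : exists w, proj1_sig (Ksrc (z (- Z.of_nat k + Z.of_nat (k + k))%Z)) w.
  exact: KV_inhabited.
have := Kpath_prepend zpath zkw.
case: (proj2_sig (Ksrc (z (- Z.of_nat k)%Z))) => y0 [_ ->] [_ [x [xpath xlab]]].
exists (fun i => x (i + Z.of_nat k)%Z); split.
  by move=> i; rewrite xpath; congr (src (x _)); lia.
move=> i ik; rewrite -xlab /concat (_ : (i + Z.of_nat k <? 0)%Z = false); last by lia.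
rewrite /prepend (_ : Z.to_nat (i + Z.of_nat k) < k + k); last by lia.
by rewrite /labcode; congr (Klab (z _)); lia.
Qed.

Lemma regular_point_labcode_map (S S' A : Type) (X : (Z -> S) -> Prop)
    (X' : (Z -> S') -> Prop) (lab : S -> A) (lab' : S' -> A) (f : S -> S') :
  (forall x, X x -> X' (fun i => f (x i))) ->
  (forall s, lab' (f s) = lab s) ->
  (forall y, image_shift X' (labcode lab') y -> image_shift X (labcode lab) y) ->
  forall x, regular_point X (labcode lab) x ->
    regular_point X' (labcode lab') (fun i => f (x i)).
Proof.
move=> Xf labf Xlab x [Xx [_ liftU]]; split; first exact: Xf.
split=> [z [X'z [N zx]] | y [/Xlab Xy [N yx]]].
  by split; [exists z | exists N => i /zx; rewrite /labcode => ->].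
have [z [[Xz [M zx]] zy]] : exists z, Uset X x z /\ forall i, labcode lab z i = y i.
  by apply: liftU; split=> //; exists N => i /yx ->; exact: labf.
exists (fun i => f (z i)); split; first by split; [exact: Xf | exists M => i /zx ->].
by move=> i; rewrite /labcode labf; exact: zy.
Qed.

Lemma vfollower_tgt (V E A : Type) (src tgt : E -> V) (lab : E -> A) :
  right_resolving src lab -> forall e,
  setEq (vfollower src tgt lab (tgt e))
        (fun w => vfollower src tgt lab (src e) (shiftcons (lab e) w)).
Proof.
move=> rr e w; split=> [[p [ppath [p0 pw]]] | [p [ppath [p0 pw]]]].
  exists (shiftcons e p); split; last by split=> // -[|n] /=.
  by case=> [|n] //=; rewrite p0.
have pe : p 0%N = e by apply: rr; [rewrite p0 | rewrite -(pw 0%N)].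
exists (fun n => p n.+1); split=> //; split=> [|n]; last exact: pw n.+1.
by rewrite -ppath pe.
Qed.

Section FutureCoverEmbedding.

Variables (V A E : finType) (src tgt : E -> V) (lab : E -> A).
Hypotheses (rr : right_resolving src lab) (reg : regular_graph src tgt lab).

Local Notation X := (presented src tgt lab).

Lemma vfollower_follower_set v :
  exists y, X y /\ vfollower src tgt lab v = follower_set X y.
Proof.
have [z [zpath [_ zfol]]] := reg v.
by exists (labcode lab z); split; [exists z | exact: setEq_eq].
Qed.

Definition theta_V (v : V) : KV X :=
  exist _ (vfollower src tgt lab v) (vfollower_follower_set v).

Definition theta_E (e : E) : KE X :=
  exist _ (theta_V (src e), lab e, theta_V (tgt e)) (vfollower_tgt tgt rr e).

Lemma theta_hom : lg_hom src tgt lab (@Ksrc A X) (@Ktgt A X) (@Klab A X) theta_V theta_E.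
Proof. by []. Qed.

Lemma theta_bipath x : bipath src tgt x ->
  bipath (@Ksrc A X) (@Ktgt A X) (fun i => theta_E (x i)).
Proof. by move=> xpath i; rewrite /Ksrc /Ktgt /= xpath. Qed.

Lemma theta_E_lift (e' : KE X) v :
  Ksrc e' = theta_V v -> exists2 e, src e = v & theta_E e = e'.
Proof.
case: e' => [[[s a] t] st]; rewrite /Ksrc /= => sv; rewrite {s}sv /= in st *.
have [w tw] := KV_inhabited t.
have [p [_ [p0 pw]]] := proj1 (st w) tw.
have pa : lab (p 0%N) = a by rewrite -(pw 0%N).
exists (p 0%N) => //; apply: proj1_sig_inj => /=; rewrite p0 pa; congr (_, _, _).
apply: proj1_sig_inj; apply: setEq_eq => w' /=.
by apply: iff_trans (vfollower_tgt tgt rr (p 0%N) w') _; rewrite p0 pa; apply: iff_sym.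
Qed.

Lemma theta_regular_point x :
  regular_point (bipath src tgt) (labcode lab) x ->
  regular_point (bipath (@Ksrc A X) (@Ktgt A X)) (labcode (@Klab A X))
                (fun i => theta_E (x i)).
Proof.
apply: regular_point_labcode_map => [|//|y [z [zpath yz]]]; first exact: theta_bipath.
have [x' [x'path x'z]] := Kpath_labels_presented zpath.
by exists x'; split=> // i; rewrite yz.
Qed.

Lemma theta_image_hereditary :
  hereditary (@Ksrc A X) (@Ktgt A X) (fun u => exists v, theta_V v = u).
Proof. by move=> e' [v /esym /theta_E_lift [e _ <-]]; exists (tgt e). Qed.

Lemma theta_iso : follower_separated src tgt lab ->
  iso_onto_image_subgraph (@Ksrc A X) theta_V theta_E.
Proof.
move=> sep.
have sep_eq v w : vfollower src tgt lab v = vfollower src tgt lab w -> v = w.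
  by move=> vw; apply: sep; rewrite vw.
split; first by move=> v w /(f_equal (@proj1_sig _ _)) /sep_eq.
split; first by move=> e1 e2 /(f_equal (@proj1_sig _ _)) [/sep_eq s12 l12 _]; apply: rr.
by move=> e' [v /esym /theta_E_lift [e _ <-]]; exists e.
Qed.

End FutureCoverEmbedding.

Theorem proposition3p1 (A V E : finType) (src tgt : E -> V) (lab : E -> A)
  (Y : (Z -> A) -> Prop) :
  essential src tgt ->
  setEq Y (presented src tgt lab) ->
  right_resolving src lab ->
  regular_graph src tgt lab ->
  exists (thV : V -> KV Y) (thE : E -> KE Y),
    lg_hom src tgt lab (@Ksrc A Y) (@Ktgt A Y) (@Klab A Y) thV thE /\
    (forall x : Z -> E,
        regular_point (bipath src tgt) (labcode lab) x ->
        regular_point (bipath (@Ksrc A Y) (@Ktgt A Y)) (labcode (@Klab A Y))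
                      (fun i => thE (x i))) /\
    hereditary (@Ksrc A Y) (@Ktgt A Y) (fun u => exists v, thV v = u) /\
    (follower_separated src tgt lab ->
       iso_onto_image_subgraph (@Ksrc A Y) thV thE).
Proof.
move=> _ /setEq_eq -> rr reg.
exists (theta_V reg), (theta_E rr reg); split; first exact: theta_hom.
split; first exact: theta_regular_point.
by split; [exact: theta_image_hereditary | exact: theta_iso].
Qed.
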